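(* Let $G$ be a finitely generated nilpotent group. There are first-order formulas in the language of groups which, in every group $H\equiv G$, define the subgroups $M(H)=Is(H'\cdot Z(H))$ and $N(H)=Is(H')\cdot Z(H)$ respectively. In particular the finite abelian quotient $Is(G'Z(G))/(Is(G')Z(G))$ is interpretable in $G$ uniformly with respect to $Th(G)$.
   Context: $Is(N)=\{x\in H:\ x^k\in N\text{ for some integer }k\ge1\}$; $Z(H)$ is the center and $H'$ the commutator subgroup. A structure is interpretable in $G$ uniformly with respect to $Th(G)$ if a single fixed system of formulas interprets the corresponding structure in every model of $Th(G)$. *)

From Stdlib Require Import Arith List.

Set Implicit Arguments.

Record group := Group {
  car :> Type;
  gmul : car -> car -> car;
  ginv : car -> car;
  gone : car;
  gassoc : forall x y z, gmul x (gmul y z) = gmul (gmul x y) z;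
  gmul1l : forall x, gmul gone x = x;
  gmulVl : forall x, gmul (ginv x) x = gone
}.

Arguments gmul {g} _ _.
Arguments ginv {g} _.
Arguments gone {g}.

Inductive term :=
| tvar (n : nat)
| tone
| tmul (t u : term)
| tinv (t : term).

Inductive formula :=
| feq (t u : term)
| fbot
| fimp (p q : formula)
| fand (p q : formula)
| f_or (p q : formula)
| fall (v : nat) (p : formula)
| fex (v : nat) (p : formula).

Fixpoint teval (G : group) (e : nat -> G) (t : term) : G :=
  match t with
  | tvar n => e n
  | tone => gone
  | tmul a b => gmul (teval G e a) (teval G e b)
  | tinv a => ginv (teval G e a)
  end.

Definition upd (G : group) (e : nat -> G) (v : nat) (a : G) : nat -> G :=
  fun n => if Nat.eqb n v then a else e n.

Fixpoint sat (G : group) (e : nat -> G) (p : formula) : Prop :=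
  match p with
  | feq t u => teval G e t = teval G e u
  | fbot => False
  | fimp a b => sat G e a -> sat G e b
  | fand a b => sat G e a /\ sat G e b
  | f_or a b => sat G e a \/ sat G e b
  | fall v a => forall x : G, sat G (upd G e v x) a
  | fex v a => exists x : G, sat G (upd G e v x) a
  end.

Arguments teval {G} e t.
Arguments upd {G} e v a _.
Arguments sat {G} e p.

Fixpoint tfree (t : term) (v : nat) : bool :=
  match t with
  | tvar n => Nat.eqb n v
  | tone => false
  | tmul a b => tfree a v || tfree b v
  | tinv a => tfree a v
  end.

Fixpoint ffree (p : formula) (v : nat) : bool :=
  match p with
  | feq t u => tfree t v || tfree u v
  | fbot => false
  | fimp a b | fand a b | f_or a b => ffree a v || ffree b v
  | fall w a | fex w a => negb (Nat.eqb w v) && ffree a v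
  end.

Definition fv_below (k : nat) (p : formula) : Prop :=
  forall v, ffree p v = true -> v < k.

Definition sentence (p : formula) : Prop := fv_below 0 p.

Definition elem_equiv (G H : group) : Prop :=
  forall p, sentence p ->
    (sat (fun _ => @gone G) p <-> sat (fun _ => @gone H) p).

Definition env3 (G : group) (a b c : G) : nat -> G :=
  fun n => match n with 0 => a | 1 => b | _ => c end.
Arguments env3 {G} a b c _.

Inductive gen (G : group) (S : G -> Prop) : G -> Prop :=
| gen_in x : S x -> gen G S x
| gen_one : gen G S gone
| gen_mul x y : gen G S x -> gen G S y -> gen G S (gmul x y)
| gen_inv x : gen G S x -> gen G S (ginv x).
Arguments gen {G} S _.

Definition comm (G : group) (x y : G) : G :=
  gmul (gmul (ginv x) (ginv y)) (gmul x y).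

Arguments comm {G} x y.

Fixpoint gpow (G : group) (x : G) (k : nat) : G :=
  match k with 0 => gone | S k => gmul x (gpow G x k) end.
Arguments gpow {G} x k.

Definition derived (G : group) : G -> Prop :=
  gen (fun z => exists x y : G, z = comm x y).

Definition center (G : group) (z : G) : Prop := forall x : G, gmul z x = gmul x z.

Definition prodset (G : group) (A B : G -> Prop) (z : G) : Prop :=
  exists a b, A a /\ B b /\ z = gmul a b.
Arguments prodset {G} A B z.

Definition Is (G : group) (A : G -> Prop) (x : G) : Prop :=
  exists k, 1 <= k /\ A (gpow x k).
Arguments Is {G} A x.

Definition MIs (G : group) : G -> Prop := Is (prodset (@derived G) (@center G)).
Definition NIs (G : group) : G -> Prop := prodset (Is (@derived G)) (@center G).

(** Lower central series: gamma k = γ_{k+1}(G). *)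
Fixpoint gamma (G : group) (k : nat) : G -> Prop :=
  match k with
  | 0 => fun _ => True
  | S k => gen (fun z => exists x y : G, gamma G k y /\ z = comm x y)
  end.

Definition nilpotent (G : group) : Prop :=
  exists c, forall x : G, gamma G c x -> x = gone.

Definition fin_gen (G : group) : Prop :=
  exists (gens : nat -> G) (n : nat),
    forall x : G, gen (fun z => exists i, i < n /\ z = gens i) x.

(** Three first-order facts about G make both subgroups definable:
    - finite width: there is [m] such that every element of G' is a product of
      [m] commutators (proved by descending the lower central series, along
      which the commutator map with the generators is bilinear modulo the next
      term); so "x is in G'" and "x is in G' Z(G)" become formulas;
    - finiteness of the torsion of the finitely generated abelian groups
      G/G'Z(G) and G/G', which yields exponents [e1], [e2] with
      x in Is(G'Z(G)) <-> x^e1 in G'Z(G) and x in Is(G') <-> x^e2 in G'.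
    Each fact is (a family of) first-order sentences, hence holds in every
    H elementarily equivalent to G, and then M(H) and N(H) are defined by
    explicit formulas. *)
From Stdlib Require Import Arith List Lia ZArith Bool.
From Stdlib Require Import Classical FunctionalExtensionality PropExtensionality ProofIrrelevance ClassicalEpsilon.

Notation "x ** y" := (gmul x y) (at level 40, left associativity).

Section Basics.
Context {G : group}.
Implicit Types x y z : G.

Lemma assocR x y z : (x ** y) ** z = x ** (y ** z).
Proof. rewrite gassoc; reflexivity. Qed.
Lemma mul1 x : gone ** x = x. Proof. apply (gmul1l G). Qed.
Lemma mulVx x : ginv x ** x = gone. Proof. apply (gmulVl G). Qed.
Lemma mulKl x y : ginv x ** (x ** y) = y.
Proof. rewrite gassoc, mulVx, mul1; reflexivity. Qed.
Lemma mulxV x : x ** ginv x = gone.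
Proof.
  rewrite <- (mul1 (x ** ginv x)), <- (mulVx (ginv x)) at 1.
  rewrite assocR, (gassoc _ (ginv x) x), mulVx, mul1, mulVx. reflexivity.
Qed.
Lemma mulx1 x : x ** gone = x.
Proof. rewrite <- (mulVx x), gassoc, mulxV, mul1; reflexivity. Qed.
Lemma mulKr x y : x ** (ginv x ** y) = y.
Proof. rewrite gassoc, mulxV, mul1; reflexivity. Qed.
Lemma mul_cancel_l x y z : x ** y = x ** z -> y = z.
Proof. intro H. rewrite <- (mulKl x y), H, mulKl. reflexivity. Qed.
Lemma inv_uniq x y : x ** y = gone -> ginv x = y.
Proof. intro H. apply (mul_cancel_l x). rewrite mulxV, H. reflexivity. Qed.
Lemma invinv x : ginv (ginv x) = x.
Proof. apply inv_uniq, mulVx. Qed.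
Lemma invmul x y : ginv (x ** y) = ginv y ** ginv x.
Proof. apply inv_uniq. rewrite assocR, (gassoc _ y), mulxV, mul1, mulxV. reflexivity. Qed.
Lemma inv1 : ginv (@gone G) = gone.
Proof. apply inv_uniq, mul1. Qed.
End Basics.

Ltac gsimpl := repeat (rewrite ?invmul, ?invinv, ?inv1, ?mul1, ?mulx1, ?assocR,
                               ?mulVx, ?mulxV, ?mulKl, ?mulKr).
Ltac gsolve := gsimpl; reflexivity.

Section Pow.
Context {G : group}.
Implicit Types x y : G.

Lemma gpow_add x a b : gpow x (a + b) = gpow x a ** gpow x b.
Proof. induction a; simpl; [|rewrite IHa]; gsolve. Qed.
Lemma gpow_one k : gpow (@gone G) k = gone.
Proof. induction k; simpl; [|rewrite IHk]; gsolve. Qed.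
Lemma gpow_mulr x a b : gpow x (a * b) = gpow (gpow x a) b.
Proof.
  induction b; [now rewrite Nat.mul_0_r|].
  rewrite Nat.mul_succ_r, Nat.add_comm, gpow_add, IHb. reflexivity.
Qed.
Lemma gpow_comm2 x a b : gpow x a ** gpow x b = gpow x b ** gpow x a.
Proof. rewrite <- !gpow_add, Nat.add_comm. reflexivity. Qed.
Lemma gpow_inv x k : gpow (ginv x) k = ginv (gpow x k).
Proof.
  induction k; simpl; [now rewrite inv1|].
  rewrite IHk, <- invmul. f_equal.
  pose proof (gpow_comm2 x 1 k) as E. simpl in E. rewrite mulx1 in E. now symmetry.
Qed.
Lemma gpow_commute x y k : x ** y = y ** x -> gpow (x ** y) k = gpow x k ** gpow y k.
Proof.
  intro Hc. assert (Hy : forall j, y ** gpow x j = gpow x j ** y).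
  { induction j; simpl; [gsolve|]. rewrite <- assocR, <- Hc, assocR, IHj. gsolve. }
  induction k; simpl; [gsolve|]. rewrite IHk. gsimpl. f_equal.
  rewrite <- !assocR. f_equal. apply Hy.
Qed.
End Pow.

Definition subgroup {G : group} (S : G -> Prop) : Prop :=
  S gone /\ (forall x y, S x -> S y -> S (x ** y)) /\ (forall x, S x -> S (ginv x)).

Lemma gen_subgroup {G : group} (S : G -> Prop) : subgroup (gen S).
Proof. split; [apply gen_one|split; [apply gen_mul|apply gen_inv]]. Qed.

Lemma gen_least {G : group} (S T : G -> Prop) :
  subgroup T -> (forall x, S x -> T x) -> forall x, gen S x -> T x.
Proof. intros [H1 [Hm Hi]] HST x Hx. induction Hx; auto. Qed.

Lemma gen_mono {G : group} (S T : G -> Prop) :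
  (forall x, S x -> T x) -> forall x, gen S x -> gen T x.
Proof. intros H. apply gen_least; [apply gen_subgroup|]. intros; apply gen_in; auto. Qed.

Lemma subgroup_gpow {G : group} (S : G -> Prop) x k : subgroup S -> S x -> S (gpow x k).
Proof. intros [H1 [Hm Hi]] Hx. induction k; simpl; auto. Qed.

Lemma comm_inv {G : group} (x y : G) : ginv (comm x y) = comm y x.
Proof. unfold comm. gsolve. Qed.
Lemma comm_conj {G : group} (x y g : G) :
  ginv g ** comm x y ** g = comm (ginv g ** x ** g) (ginv g ** y ** g).
Proof. unfold comm. gsolve. Qed.

(** [commprod j g]: [g] is a product of [j] commutators.  This is the notion
    that first-order formulas can express, for each fixed [j]. *)
Fixpoint commprod {G : group} (j : nat) (g : G) : Prop :=
  match j with
  | 0 => g = gone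
  | S j => exists a b, commprod j (g ** ginv (comm a b))
  end.

Section CommProd.
Context {G : group}.

Lemma commprod_snoc j (g : G) a b : commprod j g -> commprod (S j) (g ** comm a b).
Proof. intro H. exists a, b. rewrite assocR, mulxV, mulx1. exact H. Qed.

Lemma commprod_mul i j (g h : G) : commprod i g -> commprod j h -> commprod (i + j) (g ** h).
Proof.
  revert h. induction j as [|j IH]; intros h Hg Hh; simpl in Hh.
  - subst h. rewrite Nat.add_0_r, mulx1. exact Hg.
  - destruct Hh as [a [b Hh]]. rewrite Nat.add_succ_r.
    replace (g ** h) with (g ** (h ** ginv (comm a b)) ** comm a b) by gsolve.
    apply commprod_snoc, IH; assumption.
Qed.

(** The inverse is carried along since a product of commutators is inverted by
    reversing the order and swapping the entries of each commutator. *)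
Lemma derived_commprod (g : G) : derived G g -> exists j, commprod j g /\ commprod j (ginv g).
Proof.
  induction 1 as [z [u [v ->]]| |a b _ [i [Ha Ha']] _ [j [Hb Hb']]|a _ [j [Ha Ha']]].
  - exists 1. split; [|rewrite comm_inv]; rewrite <- mul1; apply commprod_snoc; reflexivity.
  - exists 0. split; [|apply inv1]; reflexivity.
  - exists (i + j). split; [now apply commprod_mul|].
    rewrite invmul, Nat.add_comm. now apply commprod_mul.
  - exists j. rewrite invinv. now split.
Qed.

Lemma commprod_derived j (g : G) : commprod j g -> derived G g.
Proof.
  revert g. induction j as [|j IH]; intros g Hg; simpl in Hg.
  - subst g. apply gen_one.
  - destruct Hg as [a [b Hg]].
    replace g with (g ** ginv (comm a b) ** comm a b) by gsolve.
    apply gen_mul; [now apply IH|]. apply gen_in. eauto.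
Qed.

Lemma derived_commprod_bounded m :
  (forall g : G, commprod (S m) g -> commprod m g) ->
  forall g : G, derived G g <-> commprod m g.
Proof.
  intros Hw g. split; [|apply commprod_derived].
  intro Hg. destruct (derived_commprod g Hg) as [j [Hj _]]. clear Hg.
  assert (Hdown : forall i (h : G), commprod (m + i) h -> commprod m h).
  { induction i as [|i IH]; intros h Hh; [now rewrite Nat.add_0_r in Hh|].
    rewrite Nat.add_succ_r in Hh. destruct Hh as [a [b Hh]].
    replace h with (h ** ginv (comm a b) ** comm a b) by gsolve.
    apply Hw, commprod_snoc, IH, Hh. }
  destruct (le_lt_dec j m) as [Hjm|Hmj].
  - replace g with (g ** gone) by gsolve. replace m with (j + (m - j)) by lia.
    apply commprod_mul; [assumption|].
    clear. induction (m - j) as [|i IH]; [reflexivity|].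
    replace (@gone G) with (@gone G ** comm gone gone) by (unfold comm; gsolve).
    now apply commprod_snoc.
  - apply (Hdown (j - m)). now replace (m + (j - m)) with j by lia.
Qed.
End CommProd.

Section LowerCentral.
Context {G : group}.

Lemma gamma_subgroup k : subgroup (gamma G k).
Proof. destruct k; simpl; [split; [exact I|split; auto]|apply gen_subgroup]. Qed.

Lemma gamma_normal k : forall x g : G, gamma G k x -> gamma G k (ginv g ** x ** g).
Proof.
  induction k; intros x g Hx; simpl in *; [exact I|].
  induction Hx as [z [u [v [Hv ->]]]| |a b _ IHa _ IHb|a _ IHa].
  - apply gen_in. rewrite comm_conj. eauto.
  - replace (ginv g ** gone ** g) with (@gone G) by gsolve. apply gen_one.
  - replace (ginv g ** (a ** b) ** g) with ((ginv g ** a ** g) ** (ginv g ** b ** g)) by gsolve.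
    now apply gen_mul.
  - replace (ginv g ** ginv a ** g) with (ginv (ginv g ** a ** g)) by gsolve. now apply gen_inv.
Qed.

Lemma gamma_dec k (x : G) : gamma G (S k) x -> gamma G k x.
Proof.
  destruct (gamma_subgroup k) as [H1 [Hm Hi]].
  apply gen_least; [apply gamma_subgroup|]. intros z [u [v [Hv ->]]].
  replace (comm u v) with ((ginv u ** ginv v ** u) ** v) by (unfold comm; gsolve).
  apply Hm; auto. apply gamma_normal, Hi, Hv.
Qed.

Lemma gamma_anti j k (x : G) : j <= k -> gamma G k x -> gamma G j x.
Proof. induction 1; auto. intro Hg. apply IHle, gamma_dec, Hg. Qed.
End LowerCentral.

Fixpoint cprod {G : group} (x y : nat -> G) (j : nat) : G :=
  match j with 0 => gone | S j => cprod x y j ** comm (x j) (y j) end.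

Lemma commprod_cprod {G : group} (x y : nat -> G) j : commprod j (cprod x y j).
Proof. induction j; simpl; [reflexivity|now apply commprod_snoc]. Qed.

(** Modulo [gamma (k+2)], the commutator map [gamma 0 x gamma k -> gamma (k+1)]
    is bilinear and [gamma (k+1)] is central; hence every element of [gamma (k+1)]
    is congruent to a product [cprod x y n] with all [y i] in [gamma k]. *)
Section Level.
Context {G : group} (k : nat).
Local Notation Y := (gamma G k).
Local Notation C := (gamma G (S k)).

Definition congN (a b : G) : Prop := gamma G (S (S k)) (ginv a ** b).

Let NS := gamma_subgroup (G:=G) (S (S k)).

Lemma congN_refl a : congN a a.
Proof. unfold congN. rewrite mulVx. apply NS. Qed.
Lemma congN_sym a b : congN a b -> congN b a.
Proof.
  unfold congN. intro H. replace (ginv b ** a) with (ginv (ginv a ** b)) by gsolve. now apply NS.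
Qed.
Lemma congN_trans a b c : congN a b -> congN b c -> congN a c.
Proof.
  unfold congN. intros H1 H2.
  replace (ginv a ** c) with ((ginv a ** b) ** (ginv b ** c)) by gsolve. now apply NS.
Qed.
Lemma congN_mul a a' b b' : congN a a' -> congN b b' -> congN (a ** b) (a' ** b').
Proof.
  unfold congN. intros H1 H2.
  replace (ginv (a ** b) ** (a' ** b')) with ((ginv b ** (ginv a ** a') ** b) ** (ginv b ** b'))
    by gsolve.
  apply NS; [apply gamma_normal|]; assumption.
Qed.
Lemma congN_inv a a' : congN a a' -> congN (ginv a) (ginv a').
Proof.
  unfold congN. intros H.
  replace (ginv (ginv a) ** ginv a') with (ginv (ginv a) ** ginv (ginv a ** a') ** ginv a) by gsolve.
  apply gamma_normal, NS, H.
Qed.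

Lemma comm_next a b : Y b -> C (comm a b).
Proof. intro Hb. apply gen_in. eauto. Qed.

Lemma congN_swap c g : C c -> congN (c ** g) (g ** c).
Proof.
  intro Hc. unfold congN. replace (ginv (c ** g) ** (g ** c)) with (comm g c) by (unfold comm; gsolve).
  apply gen_in. eauto.
Qed.
Lemma congN_conj c g : C c -> congN (ginv g ** c ** g) c.
Proof.
  intro Hc. apply (congN_trans _ (ginv g ** (g ** c))).
  - rewrite assocR. apply congN_mul; [apply congN_refl|now apply congN_swap].
  - rewrite mulKl. apply congN_refl.
Qed.

Lemma congN_comm_mulr a y y' : Y y -> Y y' -> congN (comm a (y' ** y)) (comm a y ** comm a y').
Proof.
  intros Hy Hy'.
  replace (comm a (y' ** y)) with (comm a y ** (ginv y ** comm a y' ** y)) by (unfold comm; gsolve).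
  apply congN_mul; [apply congN_refl|]. now apply congN_conj, comm_next.
Qed.
Lemma congN_comm_invr a y : Y y -> congN (comm a (ginv y)) (ginv (comm a y)).
Proof.
  intro Hy.
  replace (comm a (ginv y)) with (ginv (ginv y) ** ginv (comm a y) ** ginv y) by (unfold comm; gsolve).
  apply congN_conj. apply gamma_subgroup. now apply comm_next.
Qed.
Lemma congN_comm_mull a a' b : Y b -> congN (comm (a ** a') b) (comm a b ** comm a' b).
Proof.
  intro Hb.
  replace (comm (a ** a') b) with ((ginv a' ** comm a b ** a') ** comm a' b) by (unfold comm; gsolve).
  apply congN_mul; [|apply congN_refl]. now apply congN_conj, comm_next.
Qed.
Lemma congN_comm_invl a b : Y b -> congN (comm (ginv a) b) (ginv (comm a b)).
Proof.
  intro Hb.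
  replace (comm (ginv a) b) with (ginv (ginv a) ** ginv (comm a b) ** ginv a) by (unfold comm; gsolve).
  apply congN_conj. apply gamma_subgroup. now apply comm_next.
Qed.

Context (x : nat -> G).

Lemma cprod_next y j : (forall i, Y (y i)) -> C (cprod x y j).
Proof.
  intro Hy. destruct (gamma_subgroup (G:=G) (S k)) as [H1 [Hm _]].
  induction j; simpl; [exact H1|]. apply Hm; [assumption|]. apply comm_next, Hy.
Qed.

Lemma cprod_mul y y' j : (forall i, Y (y i)) -> (forall i, Y (y' i)) ->
  congN (cprod x (fun i => y' i ** y i) j) (cprod x y j ** cprod x y' j).
Proof.
  intros Hy Hy'. induction j as [|j IH]; simpl; [gsimpl; apply congN_refl|].
  apply (congN_trans _ ((cprod x y j ** cprod x y' j) ** (comm (x j) (y j) ** comm (x j) (y' j)))).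
  - apply congN_mul; [exact IH|]. now apply congN_comm_mulr.
  - rewrite !assocR. apply congN_mul; [apply congN_refl|]. rewrite <- !assocR.
    apply congN_mul; [|apply congN_refl]. now apply congN_swap, cprod_next.
Qed.

Lemma cprod_inv y j : (forall i, Y (y i)) ->
  congN (cprod x (fun i => ginv (y i)) j) (ginv (cprod x y j)).
Proof.
  intros Hy. induction j as [|j IH]; simpl; [rewrite inv1; apply congN_refl|].
  rewrite invmul. apply (congN_trans _ (ginv (cprod x y j) ** ginv (comm (x j) (y j)))).
  - apply congN_mul; [exact IH|]. now apply congN_comm_invr.
  - apply congN_swap. apply gamma_subgroup. now apply cprod_next.
Qed.

Lemma cprod_single i j b : i < j ->
  cprod x (fun l => if l =? i then b else gone) j = comm (x i) b.
Proof.
  assert (Hone : forall l, l <= i -> cprod x (fun l => if l =? i then b else gone) l = gone).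
  { induction l as [|l IH]; intro Hl; simpl; [reflexivity|].
    replace (l =? i) with false by (symmetry; apply Nat.eqb_neq; lia).
    rewrite IH by lia. unfold comm. gsolve. }
  induction j as [|j IH]; intro Hij; [lia|simpl].
  destruct (Nat.eq_dec i j) as [<-|Hne].
  - rewrite Nat.eqb_refl, Hone by lia. gsolve.
  - rewrite IH by lia. replace (j =? i) with false by (symmetry; apply Nat.eqb_neq; lia).
    unfold comm. gsolve.
Qed.

Lemma cprod_one j : cprod x (fun _ => gone) j = gone.
Proof. induction j as [|j IH]; simpl; [reflexivity|]. rewrite IH. unfold comm. gsolve. Qed.

Context (n : nat).
Hypothesis Hgen : forall g : G, gen (fun z => exists i, i < n /\ z = x i) g.

Definition gen_commprod (g : G) : Prop :=
  exists y : nat -> G, (forall i, Y (y i)) /\ congN (cprod x y n) g.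

Lemma gen_commprod_subgroup : subgroup gen_commprod.
Proof.
  split; [|split].
  - exists (fun _ => gone). split; [intros; apply gamma_subgroup|].
    rewrite cprod_one. apply congN_refl.
  - intros a b [y [Hy Ha]] [y' [Hy' Hb]].
    exists (fun i => y' i ** y i). split; [intro i; now apply gamma_subgroup|].
    eapply congN_trans; [now apply cprod_mul|]. now apply congN_mul.
  - intros a [y [Hy Ha]]. exists (fun i => ginv (y i)).
    split; [intro i; now apply gamma_subgroup|].
    eapply congN_trans; [now apply cprod_inv|]. now apply congN_inv.
Qed.

Lemma gen_commprod_resp a b : gen_commprod a -> congN a b -> gen_commprod b.
Proof. intros [y [Hy H]] Hab. exists y. split; auto. eapply congN_trans; eauto. Qed.

Lemma gen_commprod_comm a b : Y b -> gen_commprod (comm a b).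
Proof.
  intros Hb. destruct gen_commprod_subgroup as [H1 [Hm Hi]].
  induction (Hgen a) as [z [i [Hi' ->]]| |a1 a2 _ IH1 _ IH2|a1 _ IH1].
  - exists (fun l => if l =? i then b else gone). split.
    + intro l. destruct (l =? i); [assumption|apply gamma_subgroup].
    + rewrite cprod_single by assumption. apply congN_refl.
  - replace (comm gone b) with (@gone G) by (unfold comm; gsolve). exact H1.
  - apply (gen_commprod_resp (comm a1 b ** comm a2 b)); [now apply Hm|].
    now apply congN_sym, congN_comm_mull.
  - apply (gen_commprod_resp (ginv (comm a1 b))); [now apply Hi|].
    now apply congN_sym, congN_comm_invl.
Qed.

Lemma gen_commprod_all g : C g -> gen_commprod g.
Proof.
  apply gen_least; [apply gen_commprod_subgroup|].
  intros z [u [v [Hv ->]]]. now apply gen_commprod_comm.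
Qed.
End Level.

(** With [n] generators and class [c], [m = n * c] works: peel off
    one product [cprod x y n] per step down the lower central series. *)
Theorem width (G : group) : fin_gen G -> nilpotent G ->
  exists m, forall g : G, derived G g -> commprod m g.
Proof.
  intros [x [n Hgen]] [c Hc].
  assert (Hd : forall t j (g : G), c <= S j + t -> gamma G (S j) g -> commprod (n * t) g).
  { induction t as [|t IH]; intros j g Hle Hg.
    - rewrite Nat.mul_0_r, (Hc g); [reflexivity|]. apply (gamma_anti _ (S j)); [lia|exact Hg].
    - destruct (gen_commprod_all j x n Hgen g Hg) as [y [Hy He]]. unfold congN in He.
      replace g with (cprod x y n ** (ginv (cprod x y n) ** g)) by gsolve.
      replace (n * S t) with (n + n * t) by lia.
      apply commprod_mul; [apply commprod_cprod|]. apply (IH (S j)); [lia|exact He]. }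
  exists (n * c). intros g Hg. apply (Hd c 0); [lia|].
  revert Hg. apply gen_mono. intros z [u [v ->]]. exists u, v. split; [exact I|reflexivity].
Qed.

Definition zpow {G : group} (x : G) (z : Z) : G :=
  match z with
  | Z0 => gone
  | Zpos p => gpow x (Pos.to_nat p)
  | Zneg p => ginv (gpow x (Pos.to_nat p))
  end.

Section Zpow.
Context {G : group}.
Implicit Types x y : G.

Lemma zpow_of_nat x k : zpow x (Z.of_nat k) = gpow x k.
Proof. destruct k; simpl; [reflexivity|]. now rewrite SuccNat2Pos.id_succ. Qed.
Lemma zpow_neg_nat x k : zpow x (- Z.of_nat k) = ginv (gpow x k).
Proof. destruct k; simpl; [now rewrite inv1|]. now rewrite SuccNat2Pos.id_succ. Qed.
Lemma zpow_opp x z : zpow x (- z) = ginv (zpow x z).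
Proof. destruct z; simpl; [now rewrite inv1|reflexivity|now rewrite invinv]. Qed.

Lemma gpow_comm2i x a b : ginv (gpow x a) ** gpow x b = gpow x b ** ginv (gpow x a).
Proof.
  apply (mul_cancel_l (gpow x a)). rewrite mulKr.
  rewrite <- assocR, gpow_comm2, assocR, mulxV, mulx1. reflexivity.
Qed.
Lemma zpow_sub_nat x a b : zpow x (Z.of_nat a - Z.of_nat b) = gpow x a ** ginv (gpow x b).
Proof.
  destruct (le_lt_dec b a) as [H|H].
  - replace (Z.of_nat a - Z.of_nat b)%Z with (Z.of_nat (a - b)) by lia.
    rewrite zpow_of_nat. replace a with (b + (a - b)) at 2 by lia.
    rewrite gpow_add, gpow_comm2. gsolve.
  - replace (Z.of_nat a - Z.of_nat b)%Z with (- Z.of_nat (b - a))%Z by lia.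
    rewrite zpow_neg_nat. replace b with (a + (b - a)) at 2 by lia.
    rewrite gpow_add. gsimpl. rewrite <- assocR, <- gpow_comm2i. gsolve.
Qed.

(** Every integer is a difference of naturals, which reduces [zpow_add] to
    computations with natural powers. *)
Lemma zpow_add x z1 z2 : zpow x (z1 + z2) = zpow x z1 ** zpow x z2.
Proof.
  assert (Hrepr : forall z, zpow x z = zpow x (Z.of_nat (Z.to_nat z) - Z.of_nat (Z.to_nat (- z))))
    by (intro z; f_equal; lia).
  rewrite (Hrepr (z1 + z2)%Z), (Hrepr z1), (Hrepr z2).
  set (a1 := Z.to_nat z1). set (b1 := Z.to_nat (- z1)).
  set (a2 := Z.to_nat z2). set (b2 := Z.to_nat (- z2)).
  replace (Z.of_nat (Z.to_nat (z1 + z2)) - Z.of_nat (Z.to_nat (- (z1 + z2))))%Z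
    with (Z.of_nat (a1 + a2) - Z.of_nat (b1 + b2))%Z by (unfold a1, b1, a2, b2; lia).
  rewrite !zpow_sub_nat, !gpow_add. gsimpl. f_equal.
  rewrite (gassoc _ (ginv (gpow x b1))), gpow_comm2i, assocR. f_equal.
  rewrite <- !invmul, gpow_comm2. reflexivity.
Qed.
End Zpow.

Definition torsion {G : group} (t : G) : Prop := exists k, 1 <= k /\ gpow t k = gone.

Lemma exponent_list {G : group} (L : list G) :
  exists e, 1 <= e /\ forall t, In t L -> torsion t -> gpow t e = gone.
Proof.
  induction L as [|a L [e [He H]]].
  - exists 1. split; [lia|]. intros t [].
  - destruct (classic (torsion a)) as [[k [Hk Ha]]|Hna].
    + exists (k * e). split; [nia|]. intros t [<-|Ht] Htt.
      * now rewrite gpow_mulr, Ha, gpow_one.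
      * rewrite Nat.mul_comm, gpow_mulr, H, gpow_one; auto.
    + exists e. split; [assumption|]. intros t [<-|Ht] Htt; [contradiction|auto].
Qed.

(** Adding one
    generator [x] to a subgroup [B]: if some positive power of [x] lies in [B],
    the new group is a finite union of cosets [x^j B], each containing only
    finitely many torsion elements; otherwise no new torsion appears. *)
Section Abelian.
Context {A : group} (Hab : forall x y : A, x ** y = y ** x).

Lemma torsion_mul (x y : A) : torsion x -> torsion y -> torsion (x ** y).
Proof.
  intros [k [Hk Hx]] [l [Hl Hy]]. exists (k * l). split; [nia|].
  rewrite gpow_commute by apply Hab.
  rewrite gpow_mulr, Hx, gpow_one, Nat.mul_comm, gpow_mulr, Hy, gpow_one. gsolve.
Qed.
Lemma torsion_inv (x : A) : torsion x -> torsion (ginv x).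
Proof. intros [k [Hk Hx]]. exists k. split; [assumption|]. now rewrite gpow_inv, Hx, inv1. Qed.

Definition genn (g : nat -> A) (n : nat) : A -> Prop := gen (fun z => exists i, i < n /\ z = g i).

Lemma genn_decomp (g : nat -> A) n t : genn g (S n) t ->
  exists z b, genn g n b /\ t = zpow (g n) z ** b.
Proof.
  induction 1 as [z [i [Hi ->]]| |a b _ [z1 [b1 [H1 ->]]] _ [z2 [b2 [H2 ->]]]|a _ [z1 [b1 [H1 ->]]]].
  - destruct (Nat.eq_dec i n) as [->|Hne].
    + exists 1%Z, gone. split; [apply gen_one|simpl; gsolve].
    + exists 0%Z, (g i). split; [apply gen_in; exists i; split; [lia|reflexivity]|simpl; gsolve].
  - exists 0%Z, gone. split; [apply gen_one|simpl; gsolve].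
  - exists (z1 + z2)%Z, (b1 ** b2). split; [now apply gen_mul|].
    rewrite zpow_add. gsimpl. f_equal. rewrite <- !assocR. f_equal. apply Hab.
  - exists (- z1)%Z, (ginv b1). split; [now apply gen_inv|].
    rewrite zpow_opp, invmul. apply Hab.
Qed.

Context (B : A -> Prop) (HB : subgroup B).

Lemma coset_torsion_finite (LB : list A) a :
  (forall t, B t -> torsion t -> In t LB) ->
  exists L, forall b, B b -> torsion (a ** b) -> In (a ** b) L.
Proof.
  intros HLB. destruct (classic (exists b0, B b0 /\ torsion (a ** b0))) as [[b0 [Hb0 Hr]]|Hno].
  - exists (map (fun l => a ** b0 ** l) LB). intros b Hb Ht.
    apply in_map_iff. exists (ginv b0 ** b). split; [gsolve|].
    apply HLB; [apply HB; [now apply HB|assumption]|].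
    replace (ginv b0 ** b) with (ginv (a ** b0) ** (a ** b)) by gsolve.
    apply torsion_mul; [now apply torsion_inv|assumption].
  - exists nil. intros b Hb Ht. apply Hno. eauto.
Qed.

Context (x : A).

Lemma periodic_decomp d t z b : 1 <= d -> B (gpow x d) -> B b -> t = zpow x z ** b ->
  exists j b', j < d /\ B b' /\ t = gpow x j ** b'.
Proof.
  intros Hd Hxd Hb ->.
  pose proof (Z.div_mod z (Z.of_nat d) ltac:(lia)) as Hzd.
  pose proof (Z.mod_pos_bound z (Z.of_nat d) ltac:(lia)) as Hmb.
  set (q := (z / Z.of_nat d)%Z) in *. set (j := (z mod Z.of_nat d)%Z) in *.
  assert (Hq : B (zpow x (Z.of_nat d * q))).
  { destruct (Z_le_gt_dec 0 q) as [Hq|Hq].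
    - replace (Z.of_nat d * q)%Z with (Z.of_nat (d * Z.to_nat q)) by lia.
      rewrite zpow_of_nat, gpow_mulr. now apply subgroup_gpow.
    - replace (Z.of_nat d * q)%Z with (- Z.of_nat (d * Z.to_nat (- q)))%Z by lia.
      rewrite zpow_neg_nat, gpow_mulr. apply HB. now apply subgroup_gpow. }
  exists (Z.to_nat j), (zpow x (Z.of_nat d * q) ** b).
  split; [lia|]. split; [now apply HB|].
  rewrite <- zpow_of_nat, Z2Nat.id by lia. rewrite Hzd at 1.
  rewrite Z.add_comm, zpow_add. gsolve.
Qed.

Lemma aperiodic_torsion z b : ~ (exists d, 1 <= d /\ B (gpow x d)) -> B b ->
  torsion (zpow x z ** b) -> zpow x z ** b = b.
Proof.
  intros Hno Hb [k [Hk Htk]].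
  rewrite gpow_commute in Htk by apply Hab.
  assert (Hw : B (gpow (zpow x z) k)).
  { rewrite <- (invinv (gpow (zpow x z) k)), (inv_uniq _ _ Htk).
    apply HB. now apply subgroup_gpow. }
  destruct z as [|p|p]; simpl in *; [gsolve|exfalso|exfalso]; apply Hno.
  - exists (Pos.to_nat p * k). rewrite gpow_mulr. split; [nia|exact Hw].
  - exists (Pos.to_nat p * k). rewrite gpow_mulr. split; [nia|].
    rewrite gpow_inv in Hw. rewrite <- invinv. now apply HB.
Qed.
End Abelian.

Lemma finite_union {T : Type} (P : nat -> T -> Prop) :
  (forall j, exists L, forall y, P j y -> In y L) ->
  forall d, exists L, forall j y, j < d -> P j y -> In y L.
Proof.
  intros Hfin d. induction d as [|d [L HL]]; [exists nil; intros; lia|].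
  destruct (Hfin d) as [Ld HLd]. exists (L ++ Ld). intros j y Hj Hy. apply in_or_app.
  destruct (Nat.eq_dec j d) as [->|Hne]; [right; auto|left; apply (HL j); auto; lia].
Qed.

Theorem fin_torsion {A : group} (Hab : forall x y : A, x ** y = y ** x) n (g : nat -> A) :
  exists L : list A, forall t, genn g n t -> torsion t -> In t L.
Proof.
  induction n as [|n [LB HLB]].
  - exists (gone :: nil). intros t Ht _. left. symmetry. revert t Ht.
    apply gen_least; [split; [|split]; intros; subst; gsolve|]. intros z [i [Hi _]]. lia.
  - pose proof (gen_subgroup (fun z => exists i, i < n /\ z = g i)) as HB.
    destruct (classic (exists d, 1 <= d /\ genn g n (gpow (g n) d))) as [[d [Hd Hxd]]|Hno].
    + destruct (finite_union (fun j y => exists b, genn g n b /\ torsion y /\ y = gpow (g n) j ** b))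
        with (d := d) as [L HL].
      { intro j. destruct (coset_torsion_finite Hab _ HB LB (gpow (g n) j) HLB) as [L HL].
        exists L. intros y [b [Hb [Hy ->]]]. auto. }
      exists L. intros t Ht Htor. destruct (genn_decomp Hab g n t Ht) as [z [b [Hb Hz]]].
      destruct (periodic_decomp _ HB (g n) d t z b Hd Hxd Hb Hz) as [j [b' [Hj [Hb' ->]]]].
      apply (HL j); eauto.
    + exists LB. intros t Ht Htor. destruct (genn_decomp Hab g n t Ht) as [z [b [Hb ->]]].
      rewrite (aperiodic_torsion Hab _ HB (g n) z b Hno Hb Htor) in Htor |- *. auto.
Qed.

(** The quotient group [G/K] by a normal subgroup [K], built on the type of
    cosets (as predicates) with a chosen representative for each coset. *)
Section Quotient.
Context {G : group} (K : G -> Prop) (HK : subgroup K)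
  (Hn : forall a g : G, K a -> K (ginv g ** a ** g)).

Definition coset (x : G) : G -> Prop := fun y => K (ginv x ** y).
Definition Qcar := {P : G -> Prop | exists x, P = coset x}.
Definition qmk (x : G) : Qcar := exist _ (coset x) (ex_intro _ x eq_refl).
Definition rep (P : Qcar) : G := proj1_sig (constructive_indefinite_description _ (proj2_sig P)).

Lemma Qcar_eq (P Q : Qcar) : proj1_sig P = proj1_sig Q -> P = Q.
Proof. destruct P, Q. simpl. intros ->. f_equal. apply proof_irrelevance. Qed.

Lemma qmk_eq x y : qmk x = qmk y <-> K (ginv x ** y).
Proof.
  destruct HK as [K1 [Km Ki]]. split.
  - intro H. assert (E : coset x = coset y) by exact (f_equal (@proj1_sig _ _) H).
    assert (Hy : coset y y) by (unfold coset; now rewrite mulVx).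
    rewrite <- E in Hy. exact Hy.
  - intro H. apply Qcar_eq. simpl. apply functional_extensionality. intro z.
    apply propositional_extensionality. unfold coset. split; intro Hz.
    + replace (ginv y ** z) with (ginv (ginv x ** y) ** (ginv x ** z)) by gsolve. auto.
    + replace (ginv x ** z) with ((ginv x ** y) ** (ginv y ** z)) by gsolve. auto.
Qed.

Lemma qmk_rep P : qmk (rep P) = P.
Proof.
  apply Qcar_eq. simpl. unfold rep.
  destruct (constructive_indefinite_description _ _) as [x Hx]. simpl. auto.
Qed.

Lemma rep_qmk x : K (ginv (rep (qmk x)) ** x).
Proof. apply qmk_eq, qmk_rep. Qed.

Definition qmul (P Q : Qcar) : Qcar := qmk (rep P ** rep Q).
Definition qinv (P : Qcar) : Qcar := qmk (ginv (rep P)).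
Definition qone : Qcar := qmk gone.

Lemma qmul_mk x y : qmul (qmk x) (qmk y) = qmk (x ** y).
Proof.
  apply qmk_eq. destruct HK as [_ [Km _]].
  set (x' := rep (qmk x)). set (y' := rep (qmk y)).
  replace (ginv (x' ** y') ** (x ** y)) with ((ginv y' ** (ginv x' ** x) ** y') ** (ginv y' ** y))
    by gsolve.
  apply Km; [apply Hn|]; apply rep_qmk.
Qed.
Lemma qinv_mk x : qinv (qmk x) = qmk (ginv x).
Proof.
  apply qmk_eq. destruct HK as [_ [_ Ki]]. set (x' := rep (qmk x)).
  replace (ginv (ginv x') ** ginv x) with (ginv (ginv x') ** ginv (ginv x' ** x) ** ginv x') by gsolve.
  apply Hn, Ki, rep_qmk.
Qed.

Lemma q_assoc P Q R : qmul P (qmul Q R) = qmul (qmul P Q) R.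
Proof.
  rewrite <- (qmk_rep P), <- (qmk_rep Q), <- (qmk_rep R), !qmul_mk. f_equal. apply gassoc.
Qed.
Lemma q_mul1 P : qmul qone P = P.
Proof. rewrite <- (qmk_rep P). unfold qone. now rewrite qmul_mk, mul1. Qed.
Lemma q_mulV P : qmul (qinv P) P = qone.
Proof. rewrite <- (qmk_rep P). now rewrite qinv_mk, qmul_mk, mulVx. Qed.

Definition Quot : group := @Group Qcar qmul qinv qone q_assoc q_mul1 q_mulV.

Lemma qmk_gpow x k : @gpow Quot (qmk x) k = qmk (gpow x k).
Proof. induction k; simpl; [reflexivity|]. rewrite IHk. apply qmul_mk. Qed.

Lemma qmk_trivial x : qmk x = (@gone Quot) <-> K x.
Proof.
  destruct HK as [_ [_ Ki]]. simpl. unfold qone. rewrite qmk_eq. split; intro H.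
  - replace x with (ginv (ginv x ** gone)) by gsolve. auto.
  - replace (ginv x ** gone) with (ginv x) by gsolve. auto.
Qed.
End Quotient.

(** This is the torsion subgroup of [G/K]. *)
Theorem torsion_quot (G : group) (K : G -> Prop) :
  subgroup K -> (forall a g : G, K a -> K (ginv g ** a ** g)) ->
  (forall x y : G, K (comm x y)) -> fin_gen G ->
  exists (L : list G) e, 1 <= e /\
    (forall t, Is K t -> exists r, In r L /\ Is K r /\ K (ginv r ** t)) /\
    (forall t, Is K t -> K (gpow t e)).
Proof.
  intros HK Hn Hc [x [n Hgen]].
  set (Q := Quot K HK Hn).
  assert (Hab : forall u v : Q, u ** v = v ** u).
  { intros u v. rewrite <- (qmk_rep K u), <- (qmk_rep K v). simpl.
    rewrite !(qmul_mk K HK Hn). apply (qmk_eq K HK).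
    replace (ginv (rep K u ** rep K v) ** (rep K v ** rep K u)) with (comm (rep K v) (rep K u))
      by (unfold comm; gsolve).
    apply Hc. }
  assert (Hg : forall q : Q, genn (fun i => (qmk K (x i) : Q)) n q).
  { intro q. rewrite <- (qmk_rep K q). induction (Hgen (rep K q)) as [z [i [Hi ->]]| |a b _ IHa _ IHb|a _ IHa].
    - apply gen_in. eauto.
    - apply gen_one.
    - rewrite <- (qmul_mk K HK Hn). now apply (@gen_mul Q _ (qmk K a) (qmk K b)).
    - rewrite <- (qinv_mk K HK Hn). now apply (@gen_inv Q _ (qmk K a)). }
  destruct (fin_torsion Hab n (fun i => (qmk K (x i) : Q))) as [LQ HLQ].
  destruct (exponent_list LQ) as [e [He HE]].
  assert (Htor : forall t, Is K t -> torsion (qmk K t : Q)).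
  { intros t [k [Hk Ht]]. exists k. split; [assumption|].
    rewrite (qmk_gpow K HK Hn). now apply qmk_trivial. }
  exists (map (rep K) LQ), e. split; [assumption|]. split.
  - intros t Ht. exists (rep K (qmk K t)). split; [apply in_map; auto|].
    split; [|apply (rep_qmk K HK)].
    destruct Ht as [k [Hk Htk]]. exists k. split; [assumption|].
    apply (qmk_trivial K HK Hn). rewrite <- (qmk_gpow K HK Hn), qmk_rep, (qmk_gpow K HK Hn).
    now apply qmk_trivial.
  - intros t Ht. apply (qmk_trivial K HK Hn). rewrite <- (qmk_gpow K HK Hn). auto.
Qed.

Section DerivedCenter.
Context {G : group}.

Lemma derived_comm (x y : G) : derived G (comm x y).
Proof. apply gen_in. eauto. Qed.

Lemma derived_normal (a g : G) : derived G a -> derived G (ginv g ** a ** g).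
Proof.
  induction 1 as [z [u [v ->]]| |a b _ IHa _ IHb|a _ IHa].
  - rewrite comm_conj. apply derived_comm.
  - replace (ginv g ** gone ** g) with (@gone G) by gsolve. apply gen_one.
  - replace (ginv g ** (a ** b) ** g) with ((ginv g ** a ** g) ** (ginv g ** b ** g)) by gsolve.
    now apply gen_mul.
  - replace (ginv g ** ginv a ** g) with (ginv (ginv g ** a ** g)) by gsolve. now apply gen_inv.
Qed.

Lemma center_one : center G gone.
Proof. intro x. gsolve. Qed.
Lemma center_mul (a b : G) : center G a -> center G b -> center G (a ** b).
Proof. intros Ha Hb x. rewrite assocR, Hb, <- assocR, Ha. gsolve. Qed.
Lemma center_inv (a : G) : center G a -> center G (ginv a).
Proof. intros Ha x. apply (mul_cancel_l a). rewrite mulKr, <- assocR, Ha. gsolve. Qed.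
Lemma center_gpow (a : G) k : center G a -> center G (gpow a k).
Proof. intro Ha. induction k; simpl; [apply center_one|now apply center_mul]. Qed.

Definition DZ : G -> Prop := prodset (derived G) (center G).

Lemma DZ_subgroup : subgroup DZ.
Proof.
  split; [|split].
  - exists gone, gone. split; [apply gen_one|split; [apply center_one|gsolve]].
  - intros x y [a [b [Ha [Hb ->]]]] [a' [b' [Ha' [Hb' ->]]]].
    exists (a ** a'), (b ** b'). split; [now apply gen_mul|]. split; [now apply center_mul|].
    rewrite !assocR. f_equal. rewrite <- !assocR. f_equal. apply Hb.
  - intros x [a [b [Ha [Hb ->]]]]. exists (ginv a), (ginv b).
    split; [now apply gen_inv|]. split; [now apply center_inv|].
    rewrite invmul. now apply center_inv.
Qed.
Lemma DZ_normal (a g : G) : DZ a -> DZ (ginv g ** a ** g).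
Proof.
  intros [u [c [Hu [Hc ->]]]]. exists (ginv g ** u ** g), c.
  split; [now apply derived_normal|]. split; [assumption|].
  replace (ginv g ** (u ** c) ** g) with (ginv g ** u ** (c ** g)) by gsolve. rewrite Hc. gsolve.
Qed.
Lemma DZ_comm (x y : G) : DZ (comm x y).
Proof.
  exists (comm x y), gone. split; [apply derived_comm|]. split; [apply center_one|gsolve].
Qed.

(** [modCenter P g]: the coset [g Z(H)] meets [P].  This is [P Z(H)] written in
    the form that a formula expresses: "there is a central [c] with [P (g c^-1)]". *)
Definition modCenter (P : G -> Prop) (g : G) : Prop :=
  exists c, center G c /\ P (g ** ginv c).

Lemma prodset_center (P : G -> Prop) g : prodset P (center G) g <-> modCenter P g.
Proof.
  split.
  - intros [a [c [Ha [Hc ->]]]]. exists c. split; [assumption|]. now rewrite assocR, mulxV, mulx1.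
  - intros [c [Hc Hg]]. exists (g ** ginv c), c. split; [assumption|]. split; [assumption|gsolve].
Qed.

Lemma modCenter_ext (P Q : G -> Prop) g : (forall h, P h <-> Q h) -> (modCenter P g <-> modCenter Q g).
Proof. intro E. unfold modCenter. split; intros [c [Hc Hg]]; exists c; split; auto; apply E, Hg. Qed.

Lemma Is_ext (P Q : G -> Prop) g : (forall h, P h <-> Q h) -> (Is P g <-> Is Q g).
Proof. intro E. unfold Is. split; intros [k [Hk Hg]]; exists k; split; auto; apply E, Hg. Qed.

Lemma Is_exponent (P : G -> Prop) e g : 1 <= e ->
  (forall k h, 1 <= k -> P (gpow h k) -> P (gpow h e)) -> (Is P g <-> P (gpow g e)).
Proof.
  intros He HP. split; [intros [k [Hk Hg]]; eapply HP; eauto|]. intro Hg. now exists e.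
Qed.

Lemma DZ_width m : (forall g : G, commprod (S m) g -> commprod m g) ->
  forall g, DZ g <-> modCenter (commprod m) g.
Proof.
  intros Hw g. unfold DZ. rewrite prodset_center.
  apply modCenter_ext, derived_commprod_bounded, Hw.
Qed.
End DerivedCenter.

(** Formulas.  A formula built with base [B] only quantifies variables [>= B],
    so its meaning on a term [t] with free variables [< B] is that of [t]. *)
Fixpoint tpow (t : term) (k : nat) : term :=
  match k with 0 => tone | S k => tmul t (tpow t k) end.
Definition tcomm (t u : term) : term := tmul (tmul (tinv t) (tinv u)) (tmul t u).

Fixpoint commprodF (B j : nat) (t : term) : formula :=
  match j with
  | 0 => feq t tone
  | S j => fex B (fex (S B)
             (commprodF (S (S B)) j (tmul t (tinv (tcomm (tvar B) (tvar (S B)))))))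
  end.

Definition centralF (B : nat) (t : term) : formula :=
  fall B (feq (tmul t (tvar B)) (tmul (tvar B) t)).

Definition exCentralF (B : nat) (p : formula) : formula :=
  fex B (fand (centralF (S B) (tvar B)) p).

Definition modCenterF (B m : nat) (t : term) : formula :=
  exCentralF B (commprodF (S B) m (tmul t (tinv (tvar B)))).

Definition formM (B m e : nat) (t : term) : formula := modCenterF B m (tpow t e).
Definition formN (B m e : nat) (t : term) : formula :=
  exCentralF B (commprodF (S B) m (tpow (tmul t (tinv (tvar B))) e)).

Definition tbelow (B : nat) (t : term) : Prop := forall v, tfree t v = true -> v < B.

Lemma tbelow_var B v : v < B -> tbelow B (tvar v).
Proof. intros Hv w Hw. cbn [tfree] in Hw. apply Nat.eqb_eq in Hw. lia. Qed.
Lemma tbelow_mul B t u : tbelow B t -> tbelow B u -> tbelow B (tmul t u).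
Proof. intros Ht Hu v Hv. cbn [tfree] in Hv. apply orb_true_iff in Hv. destruct Hv; auto. Qed.
Lemma tbelow_inv B t : tbelow B t -> tbelow B (tinv t).
Proof. intros Ht v Hv. apply Ht, Hv. Qed.
Lemma tbelow_mono B B' t : B <= B' -> tbelow B t -> tbelow B' t.
Proof. intros HB Ht v Hv. apply Ht in Hv. lia. Qed.
Lemma tbelow_tpow B t k : tbelow B t -> tbelow B (tpow t k).
Proof. intros Ht v Hv. apply Ht. induction k; simpl in *; [discriminate|].
  apply orb_true_iff in Hv as [Hv|Hv]; auto. Qed.
Lemma tfree_tpow t k v : tfree (tpow t k) v = true -> tfree t v = true.
Proof. induction k; simpl; [discriminate|]. intro H. apply orb_true_iff in H. destruct H; auto. Qed.

Lemma ffree_commprodF B j t v : ffree (commprodF B j t) v = true -> tfree t v = true.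
Proof.
  revert B t. induction j as [|j IH]; intros B t H; cbn [commprodF ffree] in H.
  - apply orb_true_iff in H. destruct H as [H|H]; [exact H|discriminate].
  - apply andb_true_iff in H as [H1 H]. apply andb_true_iff in H as [H2 H].
    apply IH in H. cbn [tfree] in H.
    repeat (apply orb_true_iff in H; destruct H as [H|H]); try exact H;
      apply negb_true_iff, Nat.eqb_neq in H1, H2; apply Nat.eqb_eq in H; lia.
Qed.

Lemma ffree_exCentralF B p v : ffree (exCentralF B p) v = true -> v <> B /\ ffree p v = true.
Proof.
  intro H. cbn [exCentralF centralF ffree tfree] in H.
  apply andb_true_iff in H as [H1 H]. apply negb_true_iff, Nat.eqb_neq in H1.
  split; [lia|]. apply orb_true_iff in H as [H|H]; [|exact H].
  apply andb_true_iff in H as [H2 H]. apply negb_true_iff, Nat.eqb_neq in H2.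
  repeat (apply orb_true_iff in H; destruct H as [H|H]); apply Nat.eqb_eq in H; lia.
Qed.

Lemma ffree_formM B m e t v : ffree (formM B m e t) v = true -> tfree t v = true.
Proof.
  intro H. apply ffree_exCentralF in H as [Hv H]. apply ffree_commprodF in H.
  cbn [tfree] in H. apply orb_true_iff in H as [H|H]; [now apply tfree_tpow in H|].
  apply Nat.eqb_eq in H. lia.
Qed.

Lemma ffree_formN B m e t v : ffree (formN B m e t) v = true -> tfree t v = true.
Proof.
  intro H. apply ffree_exCentralF in H as [Hv H]. apply ffree_commprodF, tfree_tpow in H.
  cbn [tfree] in H. apply orb_true_iff in H as [H|H]; [exact H|].
  apply Nat.eqb_eq in H. lia.
Qed.

Section Semantics.
Context {H : group}.

Lemma upd_same (e : nat -> H) v a : upd e v a v = a.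
Proof. unfold upd. now rewrite Nat.eqb_refl. Qed.
Lemma upd_other (e : nat -> H) v a w : w <> v -> upd e v a w = e w.
Proof. intro Hw. unfold upd. apply Nat.eqb_neq in Hw. now rewrite Hw. Qed.

Lemma teval_upd_below (e : nat -> H) B t v a : tbelow B t -> B <= v ->
  teval (upd e v a) t = teval e t.
Proof.
  intros Ht Hv. induction t as [w| |t1 IH1 t2 IH2|t1 IH1]; simpl; auto.
  - apply upd_other. assert (w < B) by (apply Ht; simpl; apply Nat.eqb_refl). lia.
  - rewrite IH1, IH2; auto; intros w Hw; apply Ht; simpl; rewrite Hw; auto using orb_true_r.
  - rewrite IH1; auto.
Qed.

Lemma teval_tpow (e : nat -> H) t k : teval e (tpow t k) = gpow (teval e t) k.
Proof. induction k; simpl; [reflexivity|]. now rewrite IHk. Qed.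

Lemma sat_commprodF B j t (e : nat -> H) : tbelow B t ->
  (sat e (commprodF B j t) <-> commprod j (teval e t)).
Proof.
  revert B t e. induction j as [|j IH]; intros B t e Ht; [reflexivity|].
  cbn [commprodF sat commprod].
  assert (Hstep : forall a b, sat (upd (upd e B a) (S B) b)
             (commprodF (S (S B)) j (tmul t (tinv (tcomm (tvar B) (tvar (S B))))))
           <-> commprod j (teval e t ** ginv (comm a b))).
  { intros a b. rewrite IH.
    - unfold tcomm. cbn [teval]. rewrite !teval_upd_below with (B := B) by (auto; lia).
      rewrite upd_same, upd_other, upd_same by lia. reflexivity.
    - apply tbelow_mul; [apply (tbelow_mono B); auto|].
      apply tbelow_inv. unfold tcomm.
      repeat first [apply tbelow_mul | apply tbelow_inv | apply tbelow_var; lia]. }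
  split; intros [a [b Hab]]; exists a, b; now apply Hstep.
Qed.

Lemma sat_exCentralF B p (e : nat -> H) :
  sat e (exCentralF B p) <-> exists c, center H c /\ sat (upd e B c) p.
Proof.
  cbn [exCentralF centralF sat teval].
  assert (Hc : forall c, (forall x : H, upd (upd e B c) (S B) x B ** upd (upd e B c) (S B) x (S B)
                           = upd (upd e B c) (S B) x (S B) ** upd (upd e B c) (S B) x B)
                         <-> center H c).
  { intro c. unfold center.
    assert (E : forall y : H, upd (upd e B c) (S B) y B = c /\ upd (upd e B c) (S B) y (S B) = y).
    { intro y. rewrite upd_other, !upd_same by lia. now split. }
    split; intros Hc' y; specialize (Hc' y);
      destruct (E y) as [E1 E2]; rewrite ?E1, ?E2 in *; auto. }
  split; intros [c Hp]; exists c; [rewrite <- Hc|rewrite Hc]; tauto.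
Qed.

Lemma sat_formM B m k t (e : nat -> H) : tbelow B t ->
  (sat e (formM B m k t) <-> modCenter (commprod m) (gpow (teval e t) k)).
Proof.
  intro Ht. unfold formM, modCenterF. rewrite sat_exCentralF.
  apply Morphisms_Prop.ex_iff_morphism. intro c. apply and_iff_compat_l.
  rewrite sat_commprodF.
  - cbn [teval]. rewrite teval_upd_below with (B := B), upd_same, teval_tpow;
      [reflexivity|auto using tbelow_tpow|lia].
  - apply tbelow_mul; [|apply tbelow_inv, tbelow_var; lia].
    apply (tbelow_mono B), tbelow_tpow; auto.
Qed.

Lemma sat_formN B m k t (e : nat -> H) : tbelow B t ->
  (sat e (formN B m k t) <-> modCenter (fun a => commprod m (gpow a k)) (teval e t)).
Proof.
  intro Ht. unfold formN. rewrite sat_exCentralF.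
  apply Morphisms_Prop.ex_iff_morphism. intro c. apply and_iff_compat_l.
  rewrite sat_commprodF.
  - rewrite teval_tpow. cbn [teval]. now rewrite teval_upd_below with (B := B), upd_same.
  - apply tbelow_tpow, tbelow_mul; [apply (tbelow_mono B); auto|apply tbelow_inv, tbelow_var; lia].
Qed.
End Semantics.

Definition defines (p : formula) (P : forall K : group, K -> Prop) : Prop :=
  fv_below 1 p /\ forall (K : group) (e : nat -> K), sat e p <-> P K (e 0).

Lemma fv_below_term k p t : (forall v, ffree p v = true -> tfree t v = true) -> tbelow k t ->
  fv_below k p.
Proof. intros Hp Ht v Hv. now apply Ht, Hp. Qed.

Lemma fv_below_fand k p q : fv_below k p -> fv_below k q -> fv_below k (fand p q).
Proof. intros Hp Hq v Hv. cbn [ffree] in Hv. apply orb_true_iff in Hv as [Hv|Hv]; auto. Qed.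

(** An implication between definable predicates is expressed by a sentence, so
    it passes from [G] to every [H] elementarily equivalent to [G]. *)
Lemma transfer (G H : group) p q P Q : elem_equiv G H -> defines p P -> defines q Q ->
  (forall x : G, P G x -> Q G x) -> forall x : H, P H x -> Q H x.
Proof.
  intros HGH [Hp Pp] [Hq Pq] HG.
  assert (Hsent : sentence (fall 0 (fimp p q))).
  { intros v Hv. cbn [ffree] in Hv. apply andb_true_iff in Hv as [H0 Hv].
    apply negb_true_iff, Nat.eqb_neq in H0. apply orb_true_iff in Hv as [Hv|Hv];
      [apply Hp in Hv|apply Hq in Hv]; lia. }
  assert (Hsat : forall K : group, sat (fun _ => @gone K) (fall 0 (fimp p q)) <->
                                   (forall x : K, P K x -> Q K x)).
  { intro K. cbn [sat].
    split; intros Himp x; specialize (Himp x); rewrite Pp, Pq, upd_same in *; exact Himp. }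
  apply Hsat, HGH, Hsat, HG; exact Hsent.
Qed.

Lemma defines_commprod j : defines (commprodF 1 j (tvar 0)) (fun K x => commprod j x).
Proof.
  assert (Ht : tbelow 1 (tvar 0)) by (apply tbelow_var; lia).
  split; [apply (fv_below_term _ _ (tvar 0)); [apply ffree_commprodF|exact Ht]|].
  intros K e. now apply sat_commprodF.
Qed.

Lemma defines_commprod_pow m k :
  defines (commprodF 1 m (tpow (tvar 0) k)) (fun K x => commprod m (gpow x k)).
Proof.
  assert (Ht : tbelow 1 (tpow (tvar 0) k)) by (apply tbelow_tpow, tbelow_var; lia).
  split; [apply (fv_below_term _ _ _ (ffree_commprodF 1 m _)), Ht|].
  intros K e. rewrite sat_commprodF by exact Ht. now rewrite teval_tpow.
Qed.

Lemma defines_formM m k :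
  defines (formM 1 m k (tvar 0)) (fun K x => modCenter (commprod m) (gpow x k)).
Proof.
  assert (Ht : tbelow 1 (tvar 0)) by (apply tbelow_var; lia).
  split; [apply (fv_below_term _ _ (tvar 0)); [apply ffree_formM|exact Ht]|].
  intros K e. now apply sat_formM.
Qed.

(** The core of the theorem: three numbers [m], [e1], [e2] computed in [G] such
    that in every [H] elementarily equivalent to [G],
      M(H) = { x | x^e1 in (products of m commutators) Z(H) },
      N(H) = { x | x Z(H) meets { a | a^e2 is a product of m commutators } }.
    [m] is the width of [G'] and [e1], [e2] are exponents of the finite groups
    [Is(G'Z(G))/G'Z(G)] and [Is(G')/G']; each of these facts about [G] is a
    family of first-order sentences, hence holds in [H] as well. *)
Theorem uniform_description (G : group) : fin_gen G -> nilpotent G ->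
  exists m e1 e2, forall H : group, elem_equiv G H ->
    (forall x : H, MIs H x <-> modCenter (commprod m) (gpow x e1)) /\
    (forall x : H, NIs H x <-> modCenter (fun a => commprod m (gpow a e2)) x).
Proof.
  intros Hfg Hnil. destruct (width G Hfg Hnil) as [m Hw].
  assert (HwG : forall g : G, commprod (S m) g -> commprod m g)
    by (intros g Hg; apply Hw, (commprod_derived (S m)), Hg).
  destruct (torsion_quot G DZ DZ_subgroup DZ_normal DZ_comm Hfg) as [_ [e1 [He1 [_ HE1]]]].
  destruct (torsion_quot G (derived G) (gen_subgroup _) derived_normal derived_comm Hfg)
    as [_ [e2 [He2 [_ HE2]]]].
  exists m, e1, e2. intros H HGH.
  assert (HwH : forall g : H, commprod (S m) g -> commprod m g)
    by exact (transfer G H _ _ _ _ HGH (defines_commprod (S m)) (defines_commprod m) HwG).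
  assert (HTM : forall k (x : H), 1 <= k -> modCenter (commprod m) (gpow x k) ->
                                     modCenter (commprod m) (gpow x e1)).
  { intros k x Hk. revert x. apply (transfer G H _ _ _ _ HGH (defines_formM m k) (defines_formM m e1)).
    intros x Hx. apply (DZ_width m HwG), HE1. exists k. split; [exact Hk|].
    now apply (DZ_width m HwG). }
  assert (HTN : forall k (x : H), 1 <= k -> commprod m (gpow x k) -> commprod m (gpow x e2)).
  { intros k x Hk. revert x.
    apply (transfer G H _ _ _ _ HGH (defines_commprod_pow m k) (defines_commprod_pow m e2)).
    intros x Hx. apply Hw, HE2. exists k. split; [exact Hk|]. now apply (commprod_derived m). }
  split; intro x.
  - unfold MIs. rewrite (Is_ext _ _ x (DZ_width m HwH)). now apply Is_exponent.
  - unfold NIs. rewrite prodset_center. apply modCenter_ext. intro a.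
    rewrite (Is_ext _ _ a (derived_commprod_bounded m HwH)). now apply Is_exponent.
Qed.

(** In [G] itself: [N(G) <= M(G)], [M(G)/N(G)] is finite (it is a quotient of
    the finite group [Is(G'Z(G))/G'Z(G)]) and abelian (since [G' <= N(G)]). *)
Lemma DZ_NIs {G : group} (g : G) : DZ g -> NIs G g.
Proof.
  intros [a [c [Ha [Hc ->]]]]. exists a, c. split; [|now split].
  exists 1. split; [lia|]. simpl. now rewrite mulx1.
Qed.

Lemma NIs_MIs {G : group} (g : G) : NIs G g -> MIs G g.
Proof.
  intros [a [c [[k [Hk Ha]] [Hc ->]]]]. exists k. split; [exact Hk|].
  exists (gpow a k), (gpow c k). split; [exact Ha|]. split; [now apply center_gpow|].
  apply gpow_commute. symmetry. apply Hc.
Qed.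

Lemma quotient_finite_abelian (G : group) : fin_gen G ->
  (forall x : G, NIs G x -> MIs G x) /\
  (exists l : list G, forall m : G, MIs G m ->
      exists r, In r l /\ MIs G r /\ NIs G (gmul (ginv r) m)) /\
  (forall x y : G, MIs G x -> MIs G y -> NIs G (comm x y)).
Proof.
  intro Hfg. split; [exact NIs_MIs|split].
  - destruct (torsion_quot G DZ DZ_subgroup DZ_normal DZ_comm Hfg) as [L [_ [_ [HL _]]]].
    exists L. intros x Hx. destruct (HL x Hx) as [r [Hr [HrM HK]]].
    exists r. split; [exact Hr|]. split; [exact HrM|]. now apply DZ_NIs.
  - intros x y _ _. apply DZ_NIs, DZ_comm.
Qed.

(** The formulas defining [M(H)] and [N(H)]: the argument is a term in the
    variables 0, 1, 2, and the formulas quantify over variables [>= 3]. *)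
Lemma definable_M_N (G : group) : fin_gen G -> nilpotent G ->
  exists phiM phiN : term -> formula,
    (forall k v, v < k -> fv_below k (phiM (tvar v))) /\
    (forall k t, tbelow k t -> fv_below k (phiN t)) /\
    forall H : group, elem_equiv G H ->
      (forall (e : nat -> H) v, v < 3 -> (sat e (phiM (tvar v)) <-> MIs H (e v))) /\
      (forall (e : nat -> H) t, tbelow 3 t -> (sat e (phiN t) <-> NIs H (teval e t))).
Proof.
  intros Hfg Hnil. destruct (uniform_description G Hfg Hnil) as [m [e1 [e2 Hdesc]]].
  exists (formM 3 m e1), (formN 3 m e2). split; [|split].
  - intros k v Hv. apply (fv_below_term _ _ _ (ffree_formM _ _ _ _)), tbelow_var, Hv.
  - intros k t. apply fv_below_term, ffree_formN.
  - intros H HGH. split.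
    + intros e v Hv. rewrite (proj1 (Hdesc H HGH)), sat_formM; [reflexivity|].
      now apply tbelow_var.
    + intros e t Ht. now rewrite (proj2 (Hdesc H HGH)), sat_formN.
Qed.

Theorem mainTheorem8 :
  forall G : group, fin_gen G -> nilpotent G ->
  (* definability of M(H) and N(H) uniformly in all H ≡ G *)
  (exists phiM phiN : formula,
      fv_below 1 phiM /\ fv_below 1 phiN /\
      forall H : group, elem_equiv G H ->
        forall x : H,
          (sat (fun _ => x) phiM <-> MIs H x) /\
          (sat (fun _ => x) phiN <-> NIs H x))
  /\
  (* M(G)/N(G) is a finite abelian quotient *)
  ((forall x : G, NIs G x -> MIs G x) /\
   (exists l : list G, forall m : G, MIs G m ->
       exists r, In r l /\ MIs G r /\ NIs G (gmul (ginv r) m)) /\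
   (forall x y : G, MIs G x -> MIs G y -> NIs G (comm x y)))
  /\
  (* uniform interpretation of the quotient group M(H)/N(H) *)
  (exists dom eqv mul : formula,
      fv_below 1 dom /\ fv_below 2 eqv /\ fv_below 3 mul /\
      forall H : group, elem_equiv G H ->
        (forall x : H, sat (fun _ => x) dom <-> MIs H x) /\
        (forall x y : H, sat (env3 x y gone) eqv <->
            MIs H x /\ MIs H y /\ NIs H (gmul (ginv x) y)) /\
        (forall x y z : H, sat (env3 x y z) mul <->
            MIs H x /\ MIs H y /\ MIs H z /\
            NIs H (gmul (ginv (gmul x y)) z))).
Proof.
  intros G Hfg Hnil.
  destruct (definable_M_N G Hfg Hnil) as [phiM [phiN [HfvM [HfvN Hsem]]]].
  set (quot01 := tmul (tinv (tvar 0)) (tvar 1)).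
  set (quot012 := tmul (tinv (tmul (tvar 0) (tvar 1))) (tvar 2)).
  assert (H01 : tbelow 2 quot01)
    by (repeat first [apply tbelow_mul | apply tbelow_inv | apply tbelow_var; lia]).
  assert (H012 : tbelow 3 quot012)
    by (repeat first [apply tbelow_mul | apply tbelow_inv | apply tbelow_var; lia]).
  split; [|split; [now apply quotient_finite_abelian|]].
  - exists (phiM (tvar 0)), (phiN (tvar 0)).
    split; [|split]; [apply HfvM; lia|apply HfvN, tbelow_var; lia|].
    intros H HGH x. destruct (Hsem H HGH) as [HM HN].
    split; [apply (HM (fun _ => x) 0); lia|apply (HN (fun _ => x) (tvar 0)), tbelow_var; lia].
  - exists (phiM (tvar 0)), (fand (phiM (tvar 0)) (fand (phiM (tvar 1)) (phiN quot01))),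
      (fand (phiM (tvar 0)) (fand (phiM (tvar 1)) (fand (phiM (tvar 2)) (phiN quot012)))).
    split; [|split; [|split]]; repeat apply fv_below_fand; auto.
    intros H HGH. destruct (Hsem H HGH) as [HM HN].
    split; [|split]; intros; cbn [sat]; rewrite ?HM by lia;
      [reflexivity|rewrite (HN _ quot01) by (apply (tbelow_mono 2); [lia|exact H01])
                  |rewrite (HN _ quot012) by exact H012]; reflexivity.
Qed.
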